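(* Let $r$ be a positive integer and $k,a\in\mathbb{K}$. Then $$\frac{d^{r+1}}{dx^{r+1}}\left[x^r\left(\frac{x}{x-a}\right)^k\right]=(-a)^{r+1}k^{(r+1)}\frac{x^{k-1}}{(x-a)^{k+r+1}}.$$
   Context: $\mathbb{K}\in\{\mathbb{Q},\mathbb{R},\mathbb{C}\}$. $k^{(n)}=k(k+1)\cdots(k+n-1)$ is the rising Pochhammer symbol. The identity is understood in formal Laurent series in $x^{-1}$: $\left(\frac{x}{x-a}\right)^k:=(1-a/x)^{-k}=\sum_{i\ge0}\binom{-k}{i}(-a/x)^i$ (binomial series), and $\frac{x^{k-1}}{(x-a)^{k+r+1}}:=x^{-r-2}(1-a/x)^{-k-r-1}$, with termwise differentiation. *)

From mathcomp Require Import all_boot all_order all_algebra.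
Set Implicit Arguments. Unset Strict Implicit. Unset Printing Implicit Defensive.
Import Order.TTheory GRing.Theory Num.Theory.
Local Open Scope ring_scope.

(* A formal Laurent series in x^{-1} (finitely many positive powers of x) is
   represented by its coefficient function: f n = coefficient of x^n, n : int. *)
Definition lseries (K : Type) := int -> K.

Definition gbinom (K : fieldType) (c : K) (i : nat) : K :=
  (\prod_(j < i) (c - j%:R)) / (i`!)%:R.

Definition rising (K : ringType) (k : K) (n : nat) : K :=
  \prod_(j < n) (k + j%:R).

(* The series x^s * (1 - a/x)^e := sum_{i>=0} binom(e,i) (-a/x)^i x^s
   (binomial series); coefficient of x^n is binom(e, s-n) (-a)^(s-n) for n <= s. *)
Definition xpow_binser (K : fieldType) (s : int) (e a : K) : lseries K :=
  fun n => match (s - n)%R with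
           | Posz i => gbinom e i * (- a) ^+ i
           | Negz _ => 0
           end.

Definition lderiv (K : ringType) (f : lseries K) : lseries K :=
  fun n => (n + 1)%:~R * f (n + 1).

Definition lscale (K : ringType) (c : K) (f : lseries K) : lseries K :=
  fun n => c * f n.

(** Differentiating [x^m] [r+1] times multiplies it by [m (m-1) ... (m-r)],
    which vanishes for [0 <= m <= r] and equals [(-1)^(r+1) (r+1+i)!/i!] for
    [m = -(i+1)]. So the series [x^r (1-a/x)^(-k)] loses its terms
    [x^r, ..., x^0], and its term [binom(-k, r+1+i) (-a)^(r+1+i) x^(-(i+1))]
    becomes [(-a)^(r+1) k^(r+1) binom(-k-r-1, i) (-a)^i x^(-(r+2+i))], because
    [binom(-c, j) = (-1)^j c^(j)/j!] and [k^(r+1+i) = k^(r+1) (k+r+1)^(i)]. *)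
From mathcomp Require Import all_boot all_order all_algebra.
From mathcomp Require Import zify ring.
From Stdlib Require Import FunctionalExtensionality.
Import Order.TTheory GRing.Theory Num.Theory.
Local Open Scope ring_scope.

Lemma iter_lderivE (K : nzRingType) (m : nat) (f : lseries K) (n : int) :
  iter m (@lderiv K) f n = (\prod_(j < m) (n + j.+1)%:~R) * f (n + m).
Proof.
elim: m n => [|m IH] n; first by rewrite big_ord0 mul1r addr0.
rewrite iterS /lderiv IH big_ord_recl mulrA; congr (_ * _ * _).
- by apply: eq_bigr => j _; congr _%:~R; rewrite lift0 /=; lia.
- by congr f; lia.
Qed.

Lemma prod_Negz_addS (K : comPzRingType) (p m : nat) :
  \prod_(j < m) ((Negz p + j.+1)%:~R : K) = (-1) ^+ m * (p ^_ m)%:R.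
Proof.
have [ltpm | lemp] := ltnP p m.
  rewrite ffact_small // mulr0 (bigD1 (Ordinal ltpm)) //=.
  have -> : Negz p + p.+1 = 0 by rewrite NegzE; lia.
  by rewrite mul0r.
rewrite ffact_prod natr_prod -[m in (-1) ^+ m]card_ord -prodrN.
apply: eq_bigr => j _; have ltjm := ltn_ord j.
have -> : Negz p + j.+1 = - Posz (p - j) by rewrite NegzE; lia.
by rewrite mulrNz.
Qed.

Lemma gbinomN (K : fieldType) (c : K) (j : nat) :
  gbinom (- c) j = (-1) ^+ j * rising c j / (j`!)%:R.
Proof.
rewrite /gbinom /rising -[j in (-1) ^+ j]card_ord -prodrN.
by congr (_ / _); apply: eq_bigr => u _; rewrite opprD.
Qed.

Lemma risingD (K : nzRingType) (c : K) (m i : nat) :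
  rising c (m + i) = rising c m * rising (c + m%:R) i.
Proof.
rewrite /rising big_split_ord /=; congr (_ * _).
by apply: eq_bigr => j _; rewrite natrD addrA.
Qed.

Lemma xpow_binserE (K : fieldType) (s : int) (e a : K) (i : nat) :
  xpow_binser s e a (s - Posz i) = gbinom e i * (- a) ^+ i.
Proof. by rewrite /xpow_binser opprB addrC subrK. Qed.

Lemma xpow_binser_gt (K : fieldType) (s : int) (e a : K) (n : int) :
  s < n -> xpow_binser s e a n = 0.
Proof.
by rewrite /xpow_binser -subr_lt0; case: (s - n) => // i; rewrite ltNge lez_nat.
Qed.

Lemma iter_lderiv_xpow_binser (K : numFieldType) (r : nat) (k a : K) :
  iter r.+1 (@lderiv K) (xpow_binser (Posz r) (- k) a)
  = lscale ((- a) ^+ r.+1 * rising k r.+1)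
      (xpow_binser (- (Posz r + 2)) (- (k + r%:R + 1)) a).
Proof.
apply: functional_extensionality => n; rewrite iter_lderivE /lscale.
case: n => [q | p].
  by rewrite !xpow_binser_gt ?mulr0 //; lia.
rewrite prod_Negz_addS.
have [ltpr | [i ->]] : (p < r.+1)%N \/ exists i, p = (r.+1 + i)%N.
- by case: (ltnP p r.+1) => hp; [left | right; exists (p - r.+1)%N; lia].
- rewrite ffact_small // mulr0 mul0r [in RHS]xpow_binser_gt ?mulr0 //.
  by rewrite NegzE; lia.
have -> : Negz (r.+1 + i) + r.+1 = Posz r - Posz (r.+1 + i) by rewrite NegzE; lia.
have -> : Negz (r.+1 + i) = - (Posz r + 2) - Posz i by rewrite NegzE; lia.
rewrite !xpow_binserE !gbinomN risingD.
have -> : k + r%:R + 1 = k + r.+1%:R by rewrite mulrSr addrA.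
have fact_neq0 q : (q`!)%:R != 0 :> K by rewrite pnatr_eq0 -lt0n fact_gt0.
have ffactE : ((r.+1 + i) ^_ r.+1)%:R = ((r.+1 + i)`!)%:R / (i`!)%:R :> K.
  by rewrite -(ffact_fact (leq_addr i r.+1)) addKn natrM mulfK.
(* The two signs [(-1)^(r+1)] cancel; [field] sees this only through [sqrr_sign]. *)
rewrite ffactE !exprD -[RHS]mul1r -[X in _ = X * _](sqrr_sign K r.+1).
by field; rewrite !fact_neq0.
Qed.

Theorem lemma4p5 (K : numFieldType) (r : nat) (hr : (0 < r)%N) (k a : K) :
  iter r.+1 (@lderiv K) (xpow_binser (Posz r) (- k) a)
  = lscale ((- a) ^+ r.+1 * rising k r.+1)
      (xpow_binser (- (Posz r + 2)) (- (k + r%:R + 1)) a).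
Proof. exact: iter_lderiv_xpow_binser. Qed.
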